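(* Let $\mu$ be a probability distribution on $(E,\mathscr{E})$ and $Q$ an isometric involution of $L^{2}(\mu)$ given by a Markov kernel. If the Markov operator $P$ is $(\mu,Q)$-self-adjoint then $QP$ and $PQ$ are $\mu$-self-adjoint; if $P$ is $\mu$-self-adjoint then $QP$ and $PQ$ are $(\mu,Q)$-self-adjoint. As a result a $(\mu,Q)$-self-adjoint Markov operator is always the composition of two $\mu$-self-adjoint Markov operators.
   Context: $\langle f,g\rangle_{\mu}=\int fg\,{\rm d}\mu$ on $L^{2}(\mu)$. An isometric involution is a linear operator $Q$ on $L^{2}(\mu)$ with $\langle Qf,Qg\rangle_{\mu}=\langle f,g\rangle_{\mu}$ for all $f,g$ and $Q^{2}={\rm Id}$; here $Q$ is the operator of a Markov kernel. A Markov operator $P$ on $L^{2}(\mu)$ is $\mu$-self-adjoint if $\langle Pf,g\rangle_{\mu}=\langle f,Pg\rangle_{\mu}$ for all $f,g$, and $(\mu,Q)$-self-adjoint if $\langle Pf,g\rangle_{\mu}=\langle f,QPQg\rangle_{\mu}$ for all $f,g\in L^{2}(\mu)$. *)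

From HB Require Import structures.
From mathcomp Require Import all_boot all_order all_algebra.
From mathcomp Require Import all_classical all_reals all_analysis.
Set Implicit Arguments. Unset Strict Implicit. Unset Printing Implicit Defensive.
Import Order.TTheory GRing.Theory Num.Theory.
Local Open Scope classical_set_scope.
Local Open Scope ring_scope.

Section Defs.
Context {d : measure_display} {E : measurableType d} {R : realType}.

(* f belongs to L^2(mu) (as a function; equality in L^2 is taken mu-a.e.) *)
Definition L2 (mu : {measure set E -> \bar R}) (f : E -> R) : Prop :=
  measurable_fun setT f /\ mu.-integrable setT (fun x => ((f x) ^+ 2)%:E).

Definition ip (mu : {measure set E -> \bar R}) (f g : E -> R) : \bar R :=
  (\int[mu]_x (f x * g x)%:E)%E.

Definition kop (K : R.-pker E ~> E) (f : E -> R) : E -> R :=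
  fun x => fine (\int[K x]_y (f y)%:E)%E.

Definition markov_on_L2 (mu : {measure set E -> \bar R}) (K : R.-pker E ~> E) :=
  forall f, L2 mu f -> L2 mu (kop K f).

Definition mu_self_adjoint (mu : {measure set E -> \bar R})
  (T : (E -> R) -> (E -> R)) :=
  forall f g, L2 mu f -> L2 mu g -> ip mu (T f) g = ip mu f (T g).

Definition muQ_self_adjoint (mu : {measure set E -> \bar R})
  (Q : (E -> R) -> (E -> R)) (T : (E -> R) -> (E -> R)) :=
  forall f g, L2 mu f -> L2 mu g -> ip mu (T f) g = ip mu f (Q (T (Q g))).

Definition isometric_involution (mu : {measure set E -> \bar R})
  (Q : R.-pker E ~> E) :=
  [/\ markov_on_L2 mu Q,
      (forall f g, L2 mu f -> L2 mu g -> ip mu (kop Q f) (kop Q g) = ip mu f g)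
    & (forall f, L2 mu f -> {ae mu, forall x, kop Q (kop Q f) x = f x})].

End Defs.

From HB Require Import structures.
From mathcomp Require Import all_boot all_order all_algebra.
From mathcomp Require Import all_classical all_reals all_analysis.
From mathcomp Require Import measurable_realfun kernel lra.
Set Implicit Arguments. Unset Strict Implicit. Unset Printing Implicit Defensive.
Import Order.TTheory GRing.Theory Num.Theory.
Local Open Scope classical_set_scope.
Local Open Scope ring_scope.

(* Being an isometric involution, Q is mu-self-adjoint, and
   (mu,Q)-self-adjointness of P says that the mu-adjoint of P is QPQ.  Hence
   (QP)* = P*Q = QP and (PQ)* = QP* = PQ; if instead P* = P, then
   (QP)* = PQ = Q(QP)Q and (PQ)* = QP = Q(PQ)Q.  In the factorisation
   P = Q (QP), the factor QP is realised by the composite Markov kernel: its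
   operator agrees with QP wherever the integrals converge, which is mu-a.e.
   because mu is invariant under it,
   <QP 1_B, 1> = <P 1_B, Q 1> = <1_B, QPQ 1> = mu B.
   All identities hold only mu-a.e., which operators with an L^2 adjoint
   preserve. *)

Section L2_space.
Context {d : measure_display} {E : measurableType d} {R : realType}
  (mu : {measure set E -> \bar R}).

Lemma L2_measurable f : L2 mu f -> measurable_fun setT f.
Proof. by case. Qed.

Lemma L2_integrableM f g : L2 mu f -> L2 mu g ->
  mu.-integrable setT (fun x => (f x * g x)%:E).
Proof.
move=> [mf If] [mg Ig].
apply: (le_integrable _ _ _ (integrableD _ If Ig)) => //.
  by apply/measurable_EFinP; exact: measurable_funM.
move=> x _; rewrite !lee_fin normrM; apply: le_trans (ler_norm _).
rewrite -(real_normK (num_real (f x))) -(real_normK (num_real (g x))).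
have := normr_ge0 (f x); have := normr_ge0 (g x).
move: `|f x| `|g x| => a b ha hb; nra.
Qed.

Lemma L2B f g : L2 mu f -> L2 mu g -> L2 mu (fun x => f x - g x).
Proof.
move=> [mf If] [mg Ig]; split; first exact: measurable_funB.
have I2 := integrableD measurableT
  (integrableZl measurableT 2 If) (integrableZl measurableT 2 Ig).
apply: (le_integrable _ _ _ I2) => //.
  by apply/measurable_EFinP; apply: measurable_funX; exact: measurable_funB.
move=> x _; rewrite /= !lee_fin ger0_norm ?sqr_ge0 //.
rewrite ger0_norm; last by rewrite addr_ge0 // mulr_ge0 // sqr_ge0.
move: (f x) (g x) => a b; have := sqr_ge0 (a + b); rewrite !expr2 => ?; nra.
Qed.

Lemma L2_ae_eq f g : L2 mu f -> measurable_fun setT g ->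
  {ae mu, forall x, f x = g x} -> L2 mu g.
Proof.
move=> [mf /integrableP[_ If]] mg fg; split => //.
have mX (h : E -> R) : measurable_fun setT h ->
    measurable_fun setT (fun x => `|(h x ^+ 2)%:E|%E).
  by move=> mh; apply/measurableT_comp/measurable_EFinP/measurable_funX.
apply/integrableP; split; first exact/measurable_EFinP/measurable_funX.
rewrite (@ae_eq_integral _ _ _ mu setT (fun x => `|(f x ^+ 2)%:E|%E)) //;
  [exact: mX | exact: mX | by apply: filterS fg => x /= -> _].
Qed.

Lemma ipC f g : ip mu f g = ip mu g f.
Proof. by apply: eq_integral => x _; rewrite mulrC. Qed.

Lemma ip_fin_num f g : L2 mu f -> L2 mu g -> ip mu f g \is a fin_num.
Proof.
by move=> Lf Lg; apply: integrable_fin_num => //; exact: L2_integrableM.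
Qed.

Lemma ipBr f g h : L2 mu f -> L2 mu g -> L2 mu h ->
  ip mu f (fun x => g x - h x) = (ip mu f g - ip mu f h)%E.
Proof.
move=> Lf Lg Lh; rewrite /ip -integralB_EFin //; try exact: L2_integrableM.
by apply: eq_integral => x _; rewrite mulrBr EFinB.
Qed.

Lemma eq_ae_ipr f g h : L2 mu f -> L2 mu g -> L2 mu h ->
  {ae mu, forall x, g x = h x} -> ip mu f g = ip mu f h.
Proof.
move=> [mf _] [mg _] [mh _] gh; apply: ae_eq_integral => //.
- by apply/measurable_EFinP; exact: measurable_funM.
- by apply/measurable_EFinP; exact: measurable_funM.
- by apply: filterS gh => x /= -> _.
Qed.

Lemma eq_ae_ipl f g h : L2 mu f -> L2 mu g -> L2 mu h ->
  {ae mu, forall x, f x = g x} -> ip mu f h = ip mu g h.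
Proof. by move=> Lf Lg Lh fg; rewrite ipC (@eq_ae_ipr h f g) // ipC. Qed.

Lemma ip_self_eq0 f : L2 mu f -> ip mu f f = 0%E -> {ae mu, forall x, f x = 0}.
Proof.
move=> [mf _] ff0.
have mff : measurable_fun setT (fun x => (f x * f x)%:E).
  by apply/measurable_EFinP; exact: measurable_funM.
have : (\int[mu]_x `|(f x * f x)%:E|)%E = 0%E.
  rewrite -ff0; apply: eq_integral => x _.
  by rewrite gee0_abs // lee_fin -expr2 sqr_ge0.
move/(ae_eq_integral_abs mu measurableT mff); apply: filterS => x /(_ I) /eqP.
by rewrite eqe mulf_eq0 orbb => /eqP.
Qed.

Lemma ae_eq_ip f g : L2 mu f -> L2 mu g ->
  (forall h, L2 mu h -> ip mu f h = ip mu g h) -> {ae mu, forall x, f x = g x}.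
Proof.
move=> Lf Lg fg; have Lfg := L2B Lf Lg.
have : ip mu (fun x => f x - g x) (fun x => f x - g x) = 0%E.
  by rewrite ipBr // ipC (ipC _ g) !fg // subee // ip_fin_num.
move/(ip_self_eq0 Lfg); apply: filterS => x /eqP.
by rewrite subr_eq0 => /eqP.
Qed.

Lemma adjoint_ae_eq (T T' : (E -> R) -> E -> R) :
  (forall f, L2 mu f -> L2 mu (T f)) -> (forall f, L2 mu f -> L2 mu (T' f)) ->
  (forall f g, L2 mu f -> L2 mu g -> ip mu (T f) g = ip mu f (T' g)) ->
  forall f g, L2 mu f -> L2 mu g -> {ae mu, forall x, f x = g x} ->
  {ae mu, forall x, T f x = T g x}.
Proof.
move=> LT LT' TT' f g Lf Lg fg; apply: ae_eq_ip; try exact: LT.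
by move=> h Lh; rewrite !TT' //; apply: eq_ae_ipl => //; exact: LT'.
Qed.

End L2_space.

Section L2_finite_measure.
Context {d : measure_display} {E : measurableType d} {R : realType}
  (mu : {finite_measure set E -> \bar R}).

Lemma L2_bounded (f : E -> R) (M : R) : measurable_fun setT f ->
  (forall x, `|f x| <= M) -> L2 mu f.
Proof.
move=> mf fM; split => //.
have := finite_measure_integrable_cst mu (M ^+ 2) measurableT.
apply: le_integrable => //.
  exact/measurable_EFinP/measurable_funX.
move=> x _; rewrite /= !lee_fin (ger0_norm (sqr_ge0 M)) normrX.
by have := fM x; have := normr_ge0 (f x); nra.
Qed.

Lemma L2_cst1 : L2 mu (cst 1).
Proof. by apply: (L2_bounded (M := 1)) => // x; rewrite normr1. Qed.

Lemma L2_indic A : measurable A -> L2 mu (\1_A).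
Proof.
move=> mA; apply: (L2_bounded (M := 1)); first exact: measurable_indic.
by move=> x; rewrite /indic; case: (x \in A); rewrite ?normr0 ?normr1.
Qed.

End L2_finite_measure.

Section kernel_operator.
Context {d : measure_display} {E : measurableType d} {R : realType}
  (K : R.-pker E ~> E).

Lemma kop_cst1 : kop K (cst 1) = cst 1.
Proof.
apply/funext => x; rewrite /kop (eq_integral (cst 1%E)) //.
by rewrite integral_cst // prob_kernel mul1e.
Qed.

Lemma kop_indic A x : measurable A -> (kop K (\1_A) x)%:E = K x A.
Proof.
move=> mA; rewrite /kop integral_indic // setIT fineK // ge0_fin_numE //.
apply: le_lt_trans (ltry 1); rewrite -(prob_kernel (s := K) x).
by apply: le_measure; rewrite ?inE.
Qed.

Lemma measurable_kop f : measurable_fun setT f -> measurable_fun setT (kop K f).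
Proof.
move=> mf; have mF : measurable_fun setT (EFin \o f) by exact/measurable_EFinP.
have mK (h : E -> \bar R) : (forall z, 0 <= h z)%E -> measurable_fun setT h ->
    measurable_fun setT (fun x => \int[K x]_y h y)%E.
  move=> h0 mh; apply: measurable_fun_integral_kernel => //.
  exact: measurable_kernel.
rewrite (_ : kop K f = fun x => fine (\int[K x]_y (EFin \o f)^\+ y
                                   - \int[K x]_y (EFin \o f)^\- y)%E).
  apply: measurableT_comp; first exact: fine_measurable.
  apply: emeasurable_funB; apply: mK.
  - by move=> z; exact: funepos_ge0.
  - exact: measurable_funepos.
  - by move=> z; exact: funeneg_ge0.
  - exact: measurable_funeneg.
by apply/funext => x; rewrite /kop [in LHS]integralE.
Qed.

Lemma integral_invariant_kernel (mu : probability E R) :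
  (forall A, measurable A -> (\int[mu]_y K y A)%E = mu A) ->
  forall h : E -> \bar R, (forall z, 0 <= h z)%E -> measurable_fun setT h ->
  (\int[mu]_y \int[K y]_z h z = \int[mu]_z h z)%E.
Proof.
move=> muK h h0 mh.
(* the left-hand side integrates [h] against the constant kernel [mu] followed
   by [K], a composite kernel that equals [mu] by invariance *)
pose l := kprobability (measurable_cst (mu : pprobability E R)
  : measurable_fun setT (fun _ : E => mu : pprobability E R)).
rewrite -(integral_kcomp l (kernel.kernel_snd (T0 := E) K) point h0 mh).
by apply: eq_measure_integral => A mA _; rewrite /= /kcomp /= muK.
Qed.

End kernel_operator.

Section kernel_composition.
Context {d : measure_display} {E : measurableType d} {R : realType}
  (Q P : R.-pker E ~> E).

Let mkcomp_noparam_prob x : mkcomp_noparam Q P x setT = 1%E.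
Proof.
rewrite /= /kcomp_noparam (eq_integral (cst 1%E)) => [|y _]; last first.
  by rewrite prob_kernel.
by rewrite integral_cst //= mul1e prob_kernel.
Qed.

HB.instance Definition _ :=
  isProbabilityKernel.Build _ _ E E R (mkcomp_noparam Q P) mkcomp_noparam_prob.

Lemma integral_mkcomp_noparam x (h : E -> \bar R) : (forall z, 0 <= h z)%E ->
  measurable_fun setT h ->
  (\int[mkcomp_noparam Q P x]_z h z = \int[Q x]_y \int[P y]_z h z)%E.
Proof. exact: (integral_kcomp Q (kernel.kernel_snd (T0 := E) P) x). Qed.

Lemma integrable_integral_kernel x (h : E -> \bar R) :
  (forall z, 0 <= h z)%E -> measurable_fun setT h ->
  (\int[mkcomp_noparam Q P x]_z h z)%E \is a fin_num ->
  (Q x).-integrable setT (fun y => \int[P y]_z h z)%E.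
Proof.
move=> h0 mh hfin; apply/integrableP; split.
  by apply: measurable_fun_integral_kernel => //; exact: measurable_kernel.
rewrite (eq_integral (fun y => \int[P y]_z h z)%E).
  by rewrite -integral_mkcomp_noparam // -ge0_fin_numE // integral_ge0.
by move=> y _; rewrite gee0_abs // integral_ge0.
Qed.

Lemma kop_mkcomp_noparam (f : E -> R) x : measurable_fun setT f ->
  (\int[mkcomp_noparam Q P x]_z `|(f z)%:E| < +oo)%E ->
  kop (mkcomp_noparam Q P) f x = kop Q (kop P f) x.
Proof.
move=> mf ffin.
have mF : measurable_fun setT (EFin \o f) by exact/measurable_EFinP.
have If : (mkcomp_noparam Q P x).-integrable setT (EFin \o f).
  exact/integrableP.
have [mFp mFn] := (measurable_funepos mF, measurable_funeneg mF).
have Ip := integrable_integral_kernel (funepos_ge0 _) mFp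
  (integrable_pos_fin_num measurableT If).
have In := integrable_integral_kernel (funeneg_ge0 _) mFn
  (integrable_neg_fin_num measurableT If).
rewrite /kop [in LHS]integralE !integral_mkcomp_noparam //.
rewrite -integralB //; congr fine; apply: ae_eq_integral => //.
- by apply: emeasurable_funB; [exact: measurable_int Ip|exact: measurable_int In].
- exact/measurable_EFinP/measurable_kop.
apply: filterS2 (integrable_ae measurableT Ip) (integrable_ae measurableT In).
move=> y /(_ I) fp /(_ I) fn _ /=.
by rewrite /kop [X in _ = (fine X)%:E]integralE fineK // fin_numB fp.
Qed.

End kernel_composition.

Section isometric_involution.
Context {d : measure_display} {E : measurableType d} {R : realType}
  (mu : probability E R) (Q : R.-pker E ~> E).
Hypothesis HQ : isometric_involution mu Q.

Lemma L2_kopQ : markov_on_L2 mu Q.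
Proof. by case: HQ. Qed.

Lemma kopQK f : L2 mu f -> {ae mu, forall x, kop Q (kop Q f) x = f x}.
Proof. by case: HQ => _ _; apply. Qed.

Lemma kopQ_isometry f g : L2 mu f -> L2 mu g ->
  ip mu (kop Q f) (kop Q g) = ip mu f g.
Proof. by case: HQ => _ + _; apply. Qed.

Local Ltac L2_closure := repeat first [ assumption | apply: L2_kopQ
  | match goal with HK : markov_on_L2 _ ?K |- L2 _ (kop ?K _) => apply: HK end ].

Lemma kopQ_self_adjoint : mu_self_adjoint mu (kop Q).
Proof.
move=> f g Lf Lg; rewrite -kopQ_isometry; L2_closure.
by apply: eq_ae_ipl; L2_closure; exact: kopQK.
Qed.

Lemma kopQ_ae_eq f g : L2 mu f -> L2 mu g -> {ae mu, forall x, f x = g x} ->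
  {ae mu, forall x, kop Q f x = kop Q g x}.
Proof.
exact: (adjoint_ae_eq (T := kop Q) L2_kopQ L2_kopQ kopQ_self_adjoint).
Qed.

Section muQ_self_adjoint.
Variable P : R.-pker E ~> E.
Hypotheses (HP : markov_on_L2 mu P) (HPQ : muQ_self_adjoint mu (kop Q) (kop P)).

Lemma kopP_ae_eq f g : L2 mu f -> L2 mu g -> {ae mu, forall x, f x = g x} ->
  {ae mu, forall x, kop P f x = kop P g x}.
Proof.
apply: (adjoint_ae_eq (T' := fun g => kop Q (kop P (kop Q g)))) => // h Lh.
L2_closure.
Qed.

Lemma mu_self_adjoint_QP : mu_self_adjoint mu (fun f => kop Q (kop P f)).
Proof.
move=> f g Lf Lg; rewrite kopQ_self_adjoint ?HPQ; L2_closure.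
apply: eq_ae_ipr; L2_closure; apply: kopQ_ae_eq; L2_closure.
by apply: kopP_ae_eq; L2_closure; exact: kopQK.
Qed.

Lemma mu_self_adjoint_PQ : mu_self_adjoint mu (fun f => kop P (kop Q f)).
Proof.
move=> f g Lf Lg; rewrite HPQ -?kopQ_self_adjoint; L2_closure.
by apply: eq_ae_ipl; L2_closure; exact: kopQK.
Qed.

Lemma mkcomp_noparam_invariant B : measurable B ->
  (\int[mu]_y mkcomp_noparam Q P y B)%E = mu B.
Proof.
move=> mB; have LB := L2_indic mu mB.
have ip_kopQ1 f : L2 mu f -> ip mu (kop Q f) (cst 1) = ip mu f (cst 1).
  by move=> Lf; rewrite -{1}(kop_cst1 Q) kopQ_isometry //; exact: L2_cst1.
have ip_kopP1 f : L2 mu f -> ip mu (kop P f) (cst 1) = ip mu f (cst 1).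
  by move=> Lf; rewrite HPQ ?kop_cst1 //; exact: L2_cst1.
transitivity (ip mu (kop Q (kop P (\1_B))) (cst 1)).
  apply: eq_integral => y _; rewrite mulr1 -kop_indic //.
  congr EFin; apply: kop_mkcomp_noparam; first exact: measurable_indic.
  rewrite (eq_integral (fun z => (\1_B z)%:E)) => [|z _]; last first.
    by rewrite gee0_abs // lee_fin indic_ge0.
  by rewrite integral_indic // setIT -kop_indic // ltry.
rewrite ip_kopQ1; L2_closure; rewrite ip_kopP1 // /ip.
rewrite (eq_integral (fun z => (\1_B z)%:E)) => [|z _]; last by rewrite mulr1.
by rewrite integral_indic // setIT.
Qed.

Lemma kop_mkcomp_noparam_ae f : L2 mu f ->
  {ae mu, forall x, kop (mkcomp_noparam Q P) f x = kop Q (kop P f) x}.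
Proof.
move=> Lf; have mf := L2_measurable Lf.
have mF : measurable_fun setT (fun z => `|(f z)%:E|%E).
  exact/measurableT_comp/measurable_EFinP.
pose F y := (\int[mkcomp_noparam Q P y]_z `|(f z)%:E|)%E.
have IF : mu.-integrable setT F.
  apply/integrableP; split.
    by apply: measurable_fun_integral_kernel => //; exact: measurable_kernel.
  rewrite (eq_integral F) => [|y _]; last by rewrite gee0_abs // integral_ge0.
  rewrite /F integral_invariant_kernel //; last exact: mkcomp_noparam_invariant.
  have /integrableP[_] := L2_integrableM Lf (L2_cst1 mu).
  by under eq_integral do rewrite /= mulr1.
apply: filterS (integrable_ae measurableT IF) => x /(_ I) Fx.
by apply: kop_mkcomp_noparam => //; rewrite -ge0_fin_numE ?integral_ge0.
Qed.

Lemma markov_on_L2_mkcomp_noparam : markov_on_L2 mu (mkcomp_noparam Q P).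
Proof.
move=> f Lf; apply: (L2_ae_eq (f := kop Q (kop P f))); L2_closure.
  exact: measurable_kop (L2_measurable Lf).
by apply: filterS (kop_mkcomp_noparam_ae Lf) => x ->.
Qed.

Lemma mu_self_adjoint_mkcomp_noparam :
  mu_self_adjoint mu (kop (mkcomp_noparam Q P)).
Proof.
have L2K := markov_on_L2_mkcomp_noparam.
move=> f g Lf Lg.
rewrite (eq_ae_ipl _ _ _ (kop_mkcomp_noparam_ae Lf)); L2_closure.
rewrite mu_self_adjoint_QP //; apply: eq_ae_ipr; L2_closure.
by apply: filterS (kop_mkcomp_noparam_ae Lg) => x ->.
Qed.

Lemma kopP_factor_ae f : L2 mu f ->
  {ae mu, forall x, kop P f x = kop Q (kop (mkcomp_noparam Q P) f) x}.
Proof.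
move=> Lf; have L2K := markov_on_L2_mkcomp_noparam.
apply: filterS2 (kopQK (HP Lf))
  (kopQ_ae_eq (L2K _ Lf) _ (kop_mkcomp_noparam_ae Lf)) => [x <- ->//|].
L2_closure.
Qed.

End muQ_self_adjoint.

Section mu_self_adjoint.
Variable P : R.-pker E ~> E.
Hypotheses (HP : markov_on_L2 mu P) (HPs : mu_self_adjoint mu (kop P)).

Lemma muQ_self_adjoint_QP :
  muQ_self_adjoint mu (kop Q) (fun f => kop Q (kop P f)).
Proof.
move=> f g Lf Lg; rewrite kopQ_self_adjoint ?HPs; L2_closure.
apply: eq_ae_ipr; L2_closure.
by apply: filterS (kopQK (HP (L2_kopQ Lg))) => x ->.
Qed.

Lemma muQ_self_adjoint_PQ :
  muQ_self_adjoint mu (kop Q) (fun f => kop P (kop Q f)).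
Proof.
move=> f g Lf Lg; rewrite HPs -?kopQ_self_adjoint; L2_closure.
apply: eq_ae_ipr; L2_closure; apply: (adjoint_ae_eq HP HP HPs); L2_closure.
by apply: filterS (kopQK Lg) => x ->.
Qed.

End mu_self_adjoint.
End isometric_involution.

Theorem proposition2p5 (d : measure_display) (E : measurableType d)
  (R : realType) (mu : probability E R) (Q : R.-pker E ~> E) :
  isometric_involution mu Q ->
  (forall P : R.-pker E ~> E, markov_on_L2 mu P ->
     muQ_self_adjoint mu (kop Q) (kop P) ->
     mu_self_adjoint mu (fun f => kop Q (kop P f)) /\
     mu_self_adjoint mu (fun f => kop P (kop Q f))) /\
  (forall P : R.-pker E ~> E, markov_on_L2 mu P ->
     mu_self_adjoint mu (kop P) ->
     muQ_self_adjoint mu (kop Q) (fun f => kop Q (kop P f)) /\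
     muQ_self_adjoint mu (kop Q) (fun f => kop P (kop Q f))) /\
  (forall P : R.-pker E ~> E, markov_on_L2 mu P ->
     muQ_self_adjoint mu (kop Q) (kop P) ->
     exists K1 K2 : R.-pker E ~> E,
       [/\ markov_on_L2 mu K1, markov_on_L2 mu K2,
           mu_self_adjoint mu (kop K1), mu_self_adjoint mu (kop K2)
         & forall f, L2 mu f ->
             {ae mu, forall x, kop P f x = kop K1 (kop K2 f) x}]).
Proof.
move=> HQ; split; [|split] => P HP HPQ.
- by split; [apply: mu_self_adjoint_QP | apply: mu_self_adjoint_PQ].
- by split; [apply: muQ_self_adjoint_QP | apply: muQ_self_adjoint_PQ].
- exists Q, (mkcomp_noparam Q P); split.
  + exact: L2_kopQ.
  + exact: markov_on_L2_mkcomp_noparam.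
  + exact: kopQ_self_adjoint.
  + exact: mu_self_adjoint_mkcomp_noparam.
  + exact: kopP_factor_ae.
Qed.
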